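(* Let $p$ be an odd prime and $r\ge1$ odd. (i) If $p\equiv -1\pmod 8$, then $K=\begin{pmatrix}\frac{4}{p^r}&1\\1&\frac{p^r+1}{4}\end{pmatrix}^{-1}$ is an even integral positive-definite matrix whose lattice has discriminant form isometric to $A_{p^r}$ (and signature $2$). (ii) If $p\equiv -3\pmod 8$, then $K=\begin{pmatrix}\frac4{p^r}&1&0&0\\1&\frac{p^r+3}{4}&1&0\\0&1&2&1\\0&0&1&2\end{pmatrix}^{-1}$ is an even integral positive-definite matrix whose lattice has discriminant form isometric to $A_{p^r}$ (signature $4$). (iii) If $p\equiv 3\pmod 8$, then $K=\begin{pmatrix}\frac{2}{p^r}&1\\1&\frac{p^r+1}{2}\end{pmatrix}^{-1}$ is an even integral positive-definite matrix whose lattice has discriminant form isometric to $B_{p^r}$ (signature $2$). (iv) For every even $r\ge 2$, $K=\begin{pmatrix}\frac{3}{2^r}&1&0\\1&\frac{2^r+2}{3}&1\\0&1&2\end{pmatrix}^{-1}$ is an even integral positive-definite matrix whose lattice has discriminant form isometric to $D_{2^r}$ (signature $3$).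
   Context: For an even positive-definite integral symmetric $n\times n$ matrix $K$, the lattice $L=\mathbb{Z}^n$ with form $x^TKy$ has discriminant group $L^*/L\cong\mathbb{Z}^n/K\mathbb{Z}^n$ and discriminant form $q_L(x+L)=\tfrac12 x^TKx\in\mathbb{Q}/\mathbb{Z}$ for $x\in L^*=K^{-1}\mathbb{Z}^n$ (in coordinates, $q_L$ of the class of $K^{-1}e_i$ is $\tfrac12(K^{-1})_{ii}$). Metric groups: $A_{p^r}=(\mathbb{Z}/p^r, mx^2/p^r)$ with $\gcd(m,p)=1$, $\left(\frac{2m}{p}\right)=1$; $B_{p^r}=(\mathbb{Z}/p^r, nx^2/p^r)$ with $\gcd(n,p)=1$, $\left(\frac{2n}{p}\right)=-1$; $D_{2^r}=(\mathbb{Z}/2^r,-5x^2/2^{r+1})$. *)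

From HB Require Import structures.
From mathcomp Require Import all_boot all_order all_algebra.
Set Implicit Arguments. Unset Strict Implicit. Unset Printing Implicit Defensive.
Import Order.TTheory GRing.Theory Num.Theory.
Local Open Scope ring_scope.

Definition mxl (n : nat) (s : seq (seq rat)) : 'M[rat]_n :=
  \matrix_(i < n, j < n) nth 0 (nth [::] s i) j.

(* Integer column vectors seen as rational vectors (elements of L = Z^n). *)
Definition intvec n (x : 'cV[int]_n) : 'cV[rat]_n := map_mx (fun z : int => z%:~R) x.

Definition bform n (A : 'M[rat]_n) (x y : 'cV[rat]_n) : rat := (x^T *m A *m y) 0 0.

Definition integral_mx n (K : 'M[rat]_n) : Prop := forall i j, K i j \is a Num.int.

Definition symmetric_mx n (K : 'M[rat]_n) : Prop := K^T = K.

Definition even_mx n (K : 'M[rat]_n) : Prop :=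
  forall x : 'cV[int]_n, bform K (intvec x) (intvec x) / 2%:R \is a Num.int.

Definition posdef_mx n (K : 'M[rat]_n) : Prop :=
  forall x : 'cV[rat]_n, x != 0 -> 0 < bform K x x.

Definition even_posdef_lattice n (K : 'M[rat]_n) : Prop :=
  [/\ integral_mx K, symmetric_mx K, even_mx K & posdef_mx K].

(* Discriminant form: L*/L = K^{-1} Z^n / Z^n, identified with Z^n / K Z^n
   via y |-> K^{-1} y; q_L(K^{-1} y + L) = 1/2 y^T K^{-1} y  (in Q/Z). *)
Definition qL n (K : 'M[rat]_n) (y : 'cV[int]_n) : rat :=
  2%:R^-1 * bform (invmx K) (intvec y) (intvec y).

(* The discriminant form of K is isometric to the cyclic metric group
   (Z/N, a x^2) (values in Q/Z): there is a surjective group homomorphism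
   Z^n -> Z/N with kernel K Z^n (hence inducing an isomorphism
   Z^n/KZ^n ~= Z/N) carrying q_L to x |-> a x^2 mod Z. *)
Definition disc_iso_cyclic n (K : 'M[rat]_n) (N : nat) (a : rat) : Prop :=
  exists phi : 'cV[int]_n -> 'Z_N,
    [/\ forall x y, phi (x + y) = phi x + phi y,
        forall k : 'Z_N, exists x, phi x = k,
        forall x, phi x = 0 <-> exists y : 'cV[int]_n, intvec x = K *m intvec y
      & forall x, qL K x - a * (val (phi x))%:R ^+ 2 \is a Num.int].

(* a is a quadratic residue mod p (for p prime: Legendre symbol (a/p) = 1) *)
Definition is_qr (p : nat) (a : int) : Prop :=
  coprimez a p /\ exists x : int, (x ^+ 2 = a %[mod p])%Z.
Definition is_qnr (p : nat) (a : int) : Prop :=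
  coprimez a p /\ ~ (exists x : int, (x ^+ 2 = a %[mod p])%Z).

Definition disc_is_A n (K : 'M[rat]_n) (p r : nat) : Prop :=
  exists m : int, [/\ coprimez m p, is_qr p (2 * m)
                    & disc_iso_cyclic K (p ^ r) (m%:~R / (p ^ r)%:R)].
Definition disc_is_B n (K : 'M[rat]_n) (p r : nat) : Prop :=
  exists m : int, [/\ coprimez m p, is_qnr p (2 * m)
                    & disc_iso_cyclic K (p ^ r) (m%:~R / (p ^ r)%:R)].
Definition disc_is_D n (K : 'M[rat]_n) (r : nat) : Prop :=
  disc_iso_cyclic K (2 ^ r) (- 5%:R / (2 ^ r.+1)%:R).

From HB Require Import structures.
From mathcomp Require Import all_boot all_order all_algebra finfield.
From mathcomp Require Import ring zify.
Set Implicit Arguments. Unset Strict Implicit. Unset Printing Implicit Defensive.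
Import Order.TTheory GRing.Theory Num.Theory.
Local Open Scope ring_scope.

(* The matrix G whose inverse is K has integral entries except for its corner entry
   a/N, where N is the order of the discriminant group: G = (a/N) e e^T + G' with G'
   integral, symmetric and with even diagonal.  Hence x lies in K Z^n iff N divides
   x_0, the map x |-> c x_0 mod N identifies Z^n / K Z^n with Z/N, and
   q_L(x) = x^T G x / 2 = a x_0^2 / 2N mod Z; choosing c with a/2N = b c^2 mod Z
   gives the metric group (Z/N, b x^2).  K itself is integral, even and positive
   definite, the latter because G has an LDL^T decomposition with positive D.
   It remains to identify the metric groups: 2*2 is a square mod p, 2 is not a
   square when p = 3 mod 8 (Gauss's lemma), and -3/5 has odd square roots modulo
   every power of 2 (Hensel lifting), which turns 3/2^(r+1) into -5c^2/2^(r+1). *)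

Lemma mulmx1_invmx (R : comUnitRingType) n (A B : 'M[R]_n) :
  A *m B = 1%:M -> invmx A = B.
Proof.
move=> AB; have [uA _] := mulmx1_unit AB.
by rewrite -[invmx A]mulmx1 -AB mulmxA mulVmx ?mul1mx.
Qed.

Section BilinearForm.
Variable n : nat.
Implicit Types (A B U : 'M[rat]_n) (x y : 'cV[rat]_n).

Lemma bformE A x y : bform A x y = \sum_i \sum_j x i 0 * A i j * y j 0.
Proof.
rewrite /bform mxE exchange_big; apply: eq_bigr => j _; rewrite !mxE mulr_suml.
by apply: eq_bigr => i _; rewrite mxE.
Qed.

Lemma bformDl A B x y : bform (A + B) x y = bform A x y + bform B x y.
Proof. by rewrite /bform mulmxDr mulmxDl mxE. Qed.

Lemma bformZl a A x y : bform (a *: A) x y = a * bform A x y.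
Proof. by rewrite /bform -scalemxAr -scalemxAl mxE. Qed.

Lemma bform_tr A x y : bform A^T x y = bform A y x.
Proof.
have -> : bform A y x = (y^T *m A *m x)^T 0 0 by rewrite mxE.
by rewrite /bform !trmx_mul trmxK mulmxA.
Qed.

Lemma bform_mulmx A U x y : bform (U^T *m A *m U) x y = bform A (U *m x) (U *m y).
Proof. by rewrite /bform trmx_mul !mulmxA. Qed.

Lemma bform_diag (d : 'rV[rat]_n) x y :
  bform (diag_mx d) x y = \sum_i x i 0 * d 0 i * y i 0.
Proof. by rewrite /bform mul_mx_diag mxE; apply: eq_bigr => i _; rewrite !mxE. Qed.

Lemma bform_delta (i j : 'I_n) x y : bform (delta_mx i j) x y = x i 0 * y j 0.
Proof.
rewrite bformE (bigD1 i) //= [X in _ + X]big1 ?addr0 => [|k ki]; last first.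
  by rewrite big1 // => l _; rewrite mxE (negbTE ki) mulr0 mul0r.
rewrite (bigD1 j) //= [X in _ + X]big1 ?addr0 => [|l lj]; first by rewrite mxE !eqxx mulr1.
by rewrite mxE (negbTE lj) andbF mulr0 mul0r.
Qed.

Lemma bform_int A (x y : 'cV[int]_n) :
  integral_mx A -> bform A (intvec x) (intvec y) \is a Num.int.
Proof.
move=> Aint; rewrite bformE; apply: rpred_sum => i _; apply: rpred_sum => j _.
by rewrite !mxE !rpredM ?intr_int.
Qed.

End BilinearForm.

Definition even_gram_mx n (K : 'M[rat]_n) : Prop :=
  [/\ integral_mx K, symmetric_mx K & forall i, K i i / 2 \is a Num.int].

Section GramMatrices.
Variable n : nat.
Implicit Types (K G L : 'M[rat]_n).

Lemma even_gram_mx_even K : even_gram_mx K -> even_mx K.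
Proof.
move=> [Kint Ksym Kdiag] x.
(* K = U + U^T + D with U strictly upper triangular, and x^T U^T x = x^T U x. *)
pose U := \matrix_(i, j) if (i < j)%N then K i j else 0.
have KE : K = U + U^T + diag_mx (\row_i K i i).
  apply/matrixP => i j; rewrite !mxE.
  case: ltngtP => [ij|ji|/val_inj ->]; last by rewrite eqxx !add0r.
  - by rewrite -val_eqE (ltn_eqF ij) !addr0.
  - by rewrite -val_eqE (gtn_eqF ji) -{1}Ksym mxE addr0 add0r.
have Uint : integral_mx U by move=> i j; rewrite mxE; case: ifP.
rewrite KE !bformDl bform_tr bform_diag.
have -> : (bform U (intvec x) (intvec x) + bform U (intvec x) (intvec x) +
   \sum_i intvec x i 0 * (\row_i0 K i0 i0) 0 i * intvec x i 0) / 2 =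
   bform U (intvec x) (intvec x) + \sum_i (intvec x i 0) ^+ 2 * (K i i / 2).
  rewrite mulrDl mulr_suml; congr (_ + _); first by field.
  by apply: eq_bigr => i _; rewrite mxE; field.
rewrite rpredD ?bform_int // rpred_sum // => i _.
by rewrite rpredM ?rpredX ?Kdiag // mxE intr_int.
Qed.

Lemma posdef_diag (d : 'rV[rat]_n) : (forall i, 0 < d 0 i) -> posdef_mx (diag_mx d).
Proof.
move=> dpos x /matrix0Pn [i [j xij]]; rewrite ord1 in xij.
rewrite bform_diag (bigD1 i) //= ltr_pwDl ?sumr_ge0 // => [|k _].
  by rewrite mulrAC -expr2 mulr_gt0 ?exprn_even_gt0.
by rewrite mulrAC -expr2 mulr_ge0 ?sqr_ge0 ?ltW.
Qed.

Lemma posdef_congr K L : L \in unitmx -> posdef_mx K -> posdef_mx (L^T *m K *m L).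
Proof.
move=> Lu Kpos x x0; rewrite bform_mulmx Kpos //.
by apply: contraNneq x0 => Lx0; rewrite -(mulKmx Lu x) Lx0 mulmx0.
Qed.

Lemma posdef_invmx G : G \in unitmx -> symmetric_mx G -> posdef_mx G ->
  posdef_mx (invmx G).
Proof.
move=> Gu Gsym Gpos.
have -> : invmx G = (invmx G)^T *m G *m invmx G.
  by rewrite trmx_inv Gsym -mulmxA mulmxV // mulmx1.
by apply: posdef_congr; rewrite ?unitmx_inv.
Qed.

Lemma unitmx_unitrig L : is_trig_mx L -> (forall i, L i i = 1) -> L \in unitmx.
Proof. by move=> Ltrig Ldiag; rewrite unitmxE det_trig // big1 ?unitr1. Qed.

Lemma posdef_ldl G L (d : 'rV[rat]_n) :
  G = L *m diag_mx d *m L^T -> is_trig_mx L -> (forall i, L i i = 1) ->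
  (forall i, 0 < d 0 i) -> posdef_mx G.
Proof.
move=> -> Ltrig Ldiag dpos; rewrite -{1}(trmxK L).
apply: posdef_congr; last exact: posdef_diag.
by rewrite unitmx_tr unitmx_unitrig.
Qed.

Lemma even_posdef_lattice_invmx G K L (d : 'rV[rat]_n) :
  G *m K = 1%:M -> even_gram_mx K ->
  G = L *m diag_mx d *m L^T -> is_trig_mx L -> (forall i, L i i = 1) ->
  (forall i, 0 < d 0 i) -> even_posdef_lattice (invmx G).
Proof.
move=> GK Kgram GL Ltrig Ldiag dpos.
have Gsym : symmetric_mx G by rewrite /symmetric_mx GL !trmx_mul trmxK tr_diag_mx mulmxA.
have [Gu _] := mulmx1_unit GK.
have Kpos := posdef_invmx Gu Gsym (posdef_ldl GL Ltrig Ldiag dpos).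
rewrite (mulmx1_invmx GK) in Kpos *; have [Kint Ksym _] := Kgram.
by split=> //; apply: even_gram_mx_even.
Qed.

End GramMatrices.

Lemma intvec_invmx_latticeP n (G : 'M[rat]_n) (x : 'cV[int]_n) : G \in unitmx ->
  (exists y, intvec x = invmx G *m intvec y) <->
  (forall i, (G *m intvec x) i 0 \is a Num.int).
Proof.
move=> Gu; split=> [[y ->] i|Gx_int]; first by rewrite mulKVmx // mxE intr_int.
exists (\col_i Num.floor ((G *m intvec x) i 0)).
rewrite -{1}[intvec x](mulKmx Gu); congr (_ *m _); apply/matrixP => i j.
by rewrite ord1 [RHS]mxE [in RHS]mxE floorK ?Gx_int.
Qed.

Lemma dvdz_intr_div (N : nat) (z : int) : (0 < N)%N ->
  (z%:~R / N%:R : rat) \is a Num.int = (N%:Z %| z)%Z.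
Proof.
move=> N0; have NR : (N%:R : rat) != 0 by rewrite pnatr_eq0 -lt0n.
apply/intrP/dvdzP => [[k Hk]|[k ->]]; exists k.
  by apply: (@intr_inj rat); rewrite intrM -pmulrn -Hk mulfVK.
by rewrite intrM -pmulrn mulfK.
Qed.

Section CyclicResidues.
Variable N : nat.
Hypothesis N_gt1 : (1 < N)%N.

Lemma Zp_natr_modulus : (N%:R : 'Z_N) = 0.
Proof. by apply/val_inj; rewrite /= val_Zp_nat // modnn. Qed.

Lemma val_Zp_intr (z : int) : (val (z%:~R : 'Z_N))%:Z = (z %% N)%Z.
Proof.
have -> : (z%:~R : 'Z_N) = ((z %% N)%Z)%:~R.
  by rewrite {1}(divz_eq z N) intrD intrM -pmulrn Zp_natr_modulus mulr0 add0r.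
have : 0 <= (z %% N)%Z by rewrite modz_ge0 // eqz_nat -lt0n ltnW.
have : ((z %% N)%Z < N)%R by rewrite ltz_pmod // ltz_nat ltnW.
case: (z %% N)%Z => // k; rewrite ltz_nat => kN _.
by rewrite -pmulrn; congr Posz; exact: etrans (val_Zp_nat N_gt1 k) (modn_small kN).
Qed.

Lemma Zp_intr_eq0 (z : int) : ((z%:~R : 'Z_N) == 0) = (N%:Z %| z)%Z.
Proof. by rewrite -val_eqE -eqz_nat val_Zp_intr; apply/eqP/dvdz_mod0P. Qed.

Lemma Zp_intr_unit (c : int) : coprimez c N -> (c%:~R : 'Z_N) \is a GRing.unit.
Proof.
move=> /eqP cN; have [u [v]] := Bezoutz c N; rewrite cN => uv.
apply/unitrPr; exists u%:~R; rewrite -intrM mulrC.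
by rewrite -[u * c](addrK (v * N)) uv intrB intrM -pmulrn Zp_natr_modulus mulr0 subr0.
Qed.

End CyclicResidues.

Lemma mulmx_intvec_int n (A : 'M[rat]_n) (x : 'cV[int]_n) i :
  integral_mx A -> (A *m intvec x) i 0 \is a Num.int.
Proof. by move=> Aint; rewrite mxE rpred_sum // => j _; rewrite !mxE rpredM ?intr_int. Qed.

Lemma delta_mulmx_col n (i0 i : 'I_n) (v : 'cV[rat]_n) :
  (delta_mx i0 i0 *m v) i 0 = (i == i0)%:R * v i0 0.
Proof.
rewrite mxE (bigD1 i0) //= big1 ?addr0 => [|k ki0]; first by rewrite mxE eqxx andbT.
by rewrite mxE (negbTE ki0) andbF mul0r.
Qed.

Section RankOnePerturbation.
Variables (n : nat) (G G' : 'M[rat]_n) (i0 : 'I_n) (N : nat) (a : int).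
Hypotheses (N_gt1 : (1 < N)%N) (aN : coprimez a N) (G'int : integral_mx G').
Hypothesis GE : G = (a%:~R / N%:R) *: delta_mx i0 i0 + G'.

Lemma mulmx_rank_one_intP (x : 'cV[int]_n) :
  (forall i, (G *m intvec x) i 0 \is a Num.int) <-> (N%:Z %| x i0 0%R)%Z.
Proof.
have N_gt0 : (0 < N)%N by apply: ltnW.
have Gx i : (G *m intvec x) i 0 =
    (i == i0)%:R * ((a * x i0 0)%:~R / N%:R) + (G' *m intvec x) i 0.
  rewrite GE mulmxDl -scalemxAl mxE [in LHS]mxE delta_mulmx_col [intvec x i0 0]mxE intrM.
  ring.
have G'x i := mulmx_intvec_int x i G'int.
split=> [/(_ i0)|Nx i].
  by rewrite Gx eqxx mul1r rpredDr ?G'x // dvdz_intr_div // Gauss_dvdzr // coprimez_sym.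
by rewrite Gx rpredD ?G'x // rpredM ?natr_int // dvdz_intr_div // dvdz_mull.
Qed.

Lemma disc_iso_cyclic_rank_one (c : int) (b : rat) :
  G \in unitmx -> even_mx G' -> coprimez c N ->
  b * N%:R *+ 2 \is a Num.int -> b * N%:R ^+ 2 \is a Num.int ->
  a%:~R / N%:R / 2 - b * c%:~R ^+ 2 \is a Num.int ->
  disc_iso_cyclic (invmx G) N b.
Proof.
move=> Gu G'even cN b2N bN2 abc.
have NR : (N%:R : rat) != 0 by rewrite pnatr_eq0 -lt0n ltnW.
exists (fun x => ((c * x i0 0)%:~R : 'Z_N)); split.
- by move=> x y; rewrite mxE mulrDr intrD.
- move=> k; exists (const_mx (val ((c%:~R)^-1 * k))%:Z).
  by rewrite mxE intrM -pmulrn (natr_Zp ((c%:~R)^-1 * k)) mulVKr ?Zp_intr_unit.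
- move=> x; apply: (iff_trans _ (iff_sym (intvec_invmx_latticeP x Gu))).
  apply: (iff_trans _ (iff_sym (mulmx_rank_one_intP x))).
  have Nc : coprimez N c by rewrite coprimez_sym.
  rewrite -(Gauss_dvdzr _ Nc) -Zp_intr_eq0 //.
  by split=> /eqP.
- move=> x; rewrite /qL invmxK GE bformDl bformZl bform_delta.
  set w := c * x i0 0; set q := (w %/ N)%Z.
  have -> : ((val (w%:~R : 'Z_N))%:R : rat) = (w - q * N)%:~R.
    have wq : w - q * N = (w %% N)%Z by rewrite {1}(divz_eq w N) addrAC subrr add0r.
    by rewrite wq -(val_Zp_intr N_gt1) pmulrn.
  have -> : 2^-1 * (a%:~R / N%:R * (intvec x i0 0 * intvec x i0 0)
        + bform G' (intvec x) (intvec x)) - b * (w - q * N)%:~R ^+ 2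
      = (a%:~R / N%:R / 2 - b * c%:~R ^+ 2) * (x i0 0)%:~R ^+ 2
        + bform G' (intvec x) (intvec x) / 2
        + (b * N%:R *+ 2) * (w * q)%:~R - b * N%:R ^+ 2 * (q ^+ 2)%:~R.
    by rewrite /w !mxE intrB !intrM -pmulrn mulr2n; field.
  apply: rpredB; last by apply: rpredM; rewrite ?intr_int.
  apply: rpredD; last by apply: rpredM; rewrite ?intr_int.
  by apply: rpredD; [apply: rpredM; rewrite ?rpredX ?intr_int | apply: G'even].
Qed.

End RankOnePerturbation.

Lemma disc_iso_cyclic_rank_one_odd n (G G' : 'M[rat]_n) (i0 : 'I_n) (N : nat) (m : int) :
  (1 < N)%N -> coprimez (2 * m) N -> G \in unitmx ->
  G = ((2 * m)%:~R / N%:R) *: delta_mx i0 i0 + G' -> even_gram_mx G' ->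
  disc_iso_cyclic (invmx G) N (m%:~R / N%:R).
Proof.
move=> N_gt1 mN Gu GE G'gram; have [G'int _ _] := G'gram.
have NR : (N%:R : rat) != 0 by rewrite pnatr_eq0 -lt0n ltnW.
apply: (disc_iso_cyclic_rank_one (c := 1) N_gt1 mN G'int GE) => //.
- exact: even_gram_mx_even.
- by rewrite coprimezE coprime1n.
- by rewrite divfK // rpredMn ?intr_int.
- by rewrite expr2 mulrA divfK // rpredM ?intr_int ?natr_int.
- by rewrite (_ : _ - _ = 0) //; rewrite intrM; field.
Qed.

Lemma fact_double (f : nat) :
  ((f.*2)`! = \prod_(k < f) k.*2.+2 * \prod_(k < f) k.*2.+1)%N.
Proof.
elim: f => [|f IH]; first by rewrite !big_ord0.
by rewrite !big_ord_recr /= doubleS !factS IH; ring.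
Qed.

Lemma fact_half_split (h : nat) :
  (h`! = \prod_(k < h./2) k.*2.+2 * \prod_(k < uphalf h) k.*2.+1)%N.
Proof.
rewrite uphalf_half -{1}[h]odd_double_half addnC.
case: (odd h); last by rewrite addn0 fact_double.
by rewrite addn1 factS fact_double big_ord_recr /=; ring.
Qed.

Lemma prod_double_succ (h : nat) : (\prod_(k < h) k.*2.+2 = 2 ^ h * h`!)%N.
Proof.
elim: h => [|h IH]; first by rewrite big_ord0.
by rewrite big_ord_recr /= IH factS expnS -mul2n; ring.
Qed.

Lemma prime_ndvd_fact p n : prime p -> (n < p)%N -> ~~ (p %| n`!)%N.
Proof.
move=> p_pr; elim: n => [|n IH] np; first by rewrite fact0 dvdn1 neq_ltn prime_gt1 ?orbT.
by rewrite factS Euclid_dvdM // negb_or IH ?(ltnW np) // andbT gtnNdvd.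
Qed.

Lemma Fp_two_pow_half p h : prime p -> p = h.*2.+1 ->
  (2%:R : 'F_p) ^+ h = (-1) ^+ uphalf h.
Proof.
move=> p_pr pE; have pR : (p%:R : 'F_p) = 0 by rewrite pchar_Fp_0.
have hp : (h < p)%N by rewrite pE -addnn; lia.
have hf0 : (h`!%:R : 'F_p) != 0.
  by rewrite -(dvdn_pcharf (pchar_Fp p_pr)) prime_ndvd_fact.
apply: (mulIf hf0); rewrite -natrX -natrM -prod_double_succ fact_half_split.
have hE : (h./2 + uphalf h)%N = h by rewrite uphalf_half addnCA addnn odd_double_half.
move: (h./2) (uphalf h) hE pE => f g <- {h hp hf0} pE.
rewrite big_split_ord /= !natrM !natr_prod mulrCA; congr (_ * _).
(* Gauss's lemma: modulo p, the even factors 2k+2 > p/2 of 2^h h! are the negatives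
   of the odd factors of h!. *)
have reflect_half (i : 'I_g) : (((f + rev_ord i).*2.+2)%:R : 'F_p) = - (i.*2.+1)%:R.
  apply/eqP; rewrite -addr_eq0 -natrD -pR pE; apply/eqP; congr _%:R.
  by rewrite /= -!addnn; have := ltn_ord i; lia.
rewrite (reindex_inj rev_ord_inj) /=; under eq_bigr do rewrite reflect_half.
by under eq_bigr do rewrite -mulN1r; rewrite big_split prodr_const card_ord.
Qed.

Lemma Fp_intr_mod p (a b : int) :
  prime p -> (a = b %[mod p])%Z -> (a%:~R : 'F_p) = b%:~R.
Proof.
move=> p_pr ab; have pR : (p%:R : 'F_p) = 0 by rewrite pchar_Fp_0.
by rewrite (divz_eq a p) (divz_eq b p) ab !intrD !intrM -!pmulrn pR !mulr0.
Qed.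

Lemma two_nonresidue p :
  prime p -> (p %% 8 = 3)%N -> ~ exists x : int, (x ^+ 2 = 2 %[mod p])%Z.
Proof.
move=> p_pr p8 [x x2]; set t := (p %/ 8)%N; set h := (4 * t + 1)%N.
have pE : p = h.*2.+1 by rewrite {1}(divn_eq p 8) p8 /h /t; lia.
have two0 : (2%:R : 'F_p) != 0.
  by rewrite -(dvdn_pcharf (pchar_Fp p_pr)) gtnNdvd // pE /h; lia.
have y2 : (x%:~R : 'F_p) ^+ 2 = 2%:R.
  by rewrite -rmorphXn /= (Fp_intr_mod p_pr x2) -pmulrn.
have y0 : (x%:~R : 'F_p) != 0 by apply: contraNneq two0 => y0; rewrite -y2 y0 expr0n.
have : (2%:R : 'F_p) ^+ h = 1.
  apply: (mulIf y0); rewrite -y2 -exprM mul1r -exprSr mul2n -pE.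
  by rewrite -{2}(expf_card (x%:~R : 'F_p)) card_Fp.
rewrite Fp_two_pow_half // (_ : uphalf h = (2 * t).+1); last first.
  by rewrite uphalfE (_ : h.+1 = (2 * t).+1.*2) ?doubleK //; rewrite /h; lia.
rewrite exprS mulN1r -signr_odd oddM /= expr0 => m1.
by move: two0; rewrite mulr2n -{1}m1 addNr eqxx.
Qed.

Lemma odd_sqrt_neg3_div5 j :
  exists d : int, ((2 ^ j.+3)%:Z %| 5 * (2 * d + 1) ^+ 2 + 3)%Z.
Proof.
elim: j => [|j [d /dvdzP [t IH]]]; first by exists 0.
have : (0 <= (t %% 2)%Z < 2)%R by rewrite modz_ge0 // ltz_pmod.
have := divz_eq t 2; set s := (t %/ 2)%Z.
case: (t %% 2)%Z => [[|[|n]]|n] //= tE _.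
- by exists d; apply/dvdzP; exists s; rewrite IH tE !expnS !PoszM; ring.
- (* the quotient t is odd: shifting the root by 2^(j+2) adds an odd multiple of 2^(j+3) *)
  exists (d + (2 ^ j.+1)%N%:Z); apply/dvdzP; exists (s + 5 * d + 3 + 5 * (2 ^ j)%N%:Z).
  move: IH; rewrite !expnS !PoszM; set X := Posz (2 ^ j) => IH.
  have -> : 5 * (2 * (d + 2 * X) + 1) ^+ 2 + 3
      = (5 * (2 * d + 1) ^+ 2 + 3) + 40 * X * (2 * d + 1) + 80 * X ^+ 2 by ring.
  by rewrite IH tE; ring.
Qed.

Lemma sqr_odd_mod8 p : odd p -> (p ^ 2 = 1 %[mod 8])%N.
Proof.
rewrite -modnXm -(odd_mod p (erefl : odd 8 = false)).
have : (p %% 8 < 8)%N by rewrite ltn_pmod.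
by case: (p %% 8)%N => [|[|[|[|[|[|[|[|]]]]]]]].
Qed.

Lemma expn_odd_mod8 p r : odd p -> odd r -> (p ^ r = p %[mod 8])%N.
Proof.
move=> op or; rewrite -[r]odd_double_half or add1n expnS -mul2n expnM.
by rewrite -modnMmr -modnXm sqr_odd_mod8 // exp1n modnMmr muln1.
Qed.

Lemma expn2_even_mod6 r : ~~ odd r -> (0 < r)%N -> (2 ^ r = 4 %[mod 6])%N.
Proof.
move=> /negbTE er; rewrite -[r]odd_double_half er add0n -mul2n expnM.
case: (r./2) => // s _; elim: s => // s IH.
by rewrite expnS -modnMmr IH.
Qed.

Lemma neg5_sqr_equiv3 r : (2 <= r)%N -> exists c : int, coprimez c (2 ^ r)%N /\
  ((3 : int)%:~R / (2 ^ r)%:R / 2 - - 5%:R / (2 ^ r.+1)%:R * c%:~R ^+ 2 : rat)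
    \is a Num.int.
Proof.
move=> r_ge2; set Q : rat := (2 ^ r)%:R.
have Q0 : Q != 0 by rewrite pnatr_eq0 expn_eq0.
have Q2 : (2 ^ r.+1)%:R = 2 * Q :> rat by rewrite expnS natrM.
have [d] := odd_sqrt_neg3_div5 (r - 2); rewrite (_ : (r - 2).+3 = r.+1); last by lia.
move=> /dvdzP [k]; rewrite expr2 => hk; exists (2 * d + 1); split.
  by rewrite -natz natrX; apply: coprimezXr; apply/coprimezP; exists (1, - d) => /=; ring.
have c2 : (2 * d + 1)%:~R ^+ 2 = (k%:~R * (2 * Q) - 3) / 5 :> rat.
  have := congr1 (fun z : int => z%:~R : rat) hk.
  rewrite /= !intrD !intrM -!pmulrn -Q2 => h.
  by rewrite expr2 -h; field.
by rewrite Q2 c2 (_ : _ - _ = k%:~R) ?intr_int //; field.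
Qed.

(* Entrywise evaluation of explicit matrices of size at most 4.  Even diagonal
   entries are written y * 2, so that the halving in [even_gram_mx] cancels. *)
Ltac mx_entries :=
  apply/matrixP => [[[|[|[|[|?]]]] ?] [[|[|[|[|?]]]] ?]] //;
  rewrite !mxE ?big_ord_recl ?big_ord0 /= ?mxE ?big_ord_recl ?big_ord0 /= ?mxE /=.

Ltac even_gram_entries :=
  split; [ move=> [[|[|[|[|?]]]] ?] [[|[|[|[|?]]]] ?] //
         | apply/matrixP => [[[|[|[|[|?]]]] ?] [[|[|[|[|?]]]] ?]] //
         | move=> [[|[|[|[|?]]]] ?] // ];
  rewrite ?mxE /= ?mulfK //.

Ltac ldl_entries := first
  [ apply/is_trig_mxP => [[[|[|[|[|?]]]] ?] [[|[|[|[|?]]]] ?]] //; rewrite mxE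
  | move=> [[|[|[|[|?]]]] ?] //; rewrite mxE /= ?divr_gt0 ?invr_gt0 ].

Ltac rpred_int := repeat match goal with
  | |- is_true ((_ + _) \in _) => apply: rpredD
  | |- is_true ((_ - _) \in _) => apply: rpredB
  | |- is_true ((_ * _) \in _) => apply: rpredM
  | |- is_true ((- _) \in _) => rewrite rpredN
  | |- is_true ((_%:~R) \in _) => apply: intr_int
  | |- is_true ((_%:R) \in _) => apply: natr_int
  end.

Lemma lattice_A_8t7 (t : nat) :
  let N := (8 * t + 7)%N in
  let K := invmx (mxl 2 [:: [:: 4%:R / N%:R; 1]; [:: 1; (N%:R + 1) / 4%:R]]) in
  even_posdef_lattice K /\ disc_iso_cyclic K N ((2 : int)%:~R / N%:R).
Proof.
move=> N K; rewrite {}/K; set P : rat := N%:R.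
have PE : P = 8 * t%:R + 7 by rewrite /P /N natrD natrM.
have tE : t%:R = (P - 7) / 8 by rewrite PE; field.
have P_gt0 : 0 < P by rewrite ltr0n /N; lia.
have P0 : P != 0 by rewrite gt_eqF.
set G := mxl 2 _.
set G' := mxl 2 [:: [:: 0; 1]; [:: 1; (t%:R + 1) * 2]].
set K := mxl 2 [:: [:: P * (t%:R + 1) * 2; - P]; [:: - P; 4]].
set L := mxl 2 [:: [:: 1; 0]; [:: P / 4; 1]].
have GE : G = ((2 * 2)%:~R / P) *: delta_mx 0 0 + G'.
  by rewrite /G /G'; mx_entries; rewrite ?tE; field.
have GK : G *m K = 1%:M by rewrite /G /K; mx_entries; rewrite ?tE; field.
have GL : G = L *m diag_mx (\row_i [:: 4 / P; 4^-1]`_i) *m L^T.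
  by rewrite /G /L; mx_entries; field.
split.
  apply: (even_posdef_lattice_invmx GK _ GL); try by ldl_entries.
  by even_gram_entries; rewrite PE; rpred_int.
have [Gu _] := mulmx1_unit GK.
apply: (disc_iso_cyclic_rank_one_odd _ _ Gu GE).
- by rewrite /N; lia.
- by rewrite coprimezE abszM coprimeMl coprime2n /N oddD oddM.
- by even_gram_entries; rpred_int.
Qed.

Lemma lattice_A_8t5 (t : nat) :
  let N := (8 * t + 5)%N in
  let K := invmx (mxl 4 [:: [:: 4%:R / N%:R; 1; 0; 0];
                            [:: 1; (N%:R + 3%:R) / 4%:R; 1; 0];
                            [:: 0; 1; 2%:R; 1];
                            [:: 0; 0; 1; 2%:R]]) in
  even_posdef_lattice K /\ disc_iso_cyclic K N ((2 : int)%:~R / N%:R).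
Proof.
move=> N K; rewrite {}/K; set P : rat := N%:R.
have PE : P = 8 * t%:R + 5 by rewrite /P /N natrD natrM.
have tE : t%:R = (P - 5) / 8 by rewrite PE; field.
have P_gt0 : 0 < P by rewrite ltr0n /N; lia.
have P0 : P != 0 by rewrite gt_eqF.
set G := mxl 4 _.
set G' := mxl 4 [:: [:: 0; 1; 0; 0]; [:: 1; (t%:R + 1) * 2; 1; 0];
                    [:: 0; 1; 2; 1]; [:: 0; 0; 1; 2]].
set K := mxl 4 [:: [:: P * (3 * t%:R + 2) * 2; - (3 * P); 2 * P; - P];
                    [:: - (3 * P); 12; -8; 4];
                    [:: 2 * P; -8; 6; -3];
                    [:: - P; 4; -3; 2]].
set L := mxl 4 [:: [:: 1; 0; 0; 0]; [:: P / 4; 1; 0; 0];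
                   [:: 0; 4 / 3; 1; 0]; [:: 0; 0; 3 / 2; 1]].
have GE : G = ((2 * 2)%:~R / P) *: delta_mx 0 0 + G'.
  by rewrite /G /G'; mx_entries; rewrite ?tE; field.
have GK : G *m K = 1%:M by rewrite /G /K; mx_entries; rewrite ?tE; field.
have GL : G = L *m diag_mx (\row_i [:: 4 / P; 3 / 4; 2 / 3; 2^-1]`_i) *m L^T.
  by rewrite /G /L; mx_entries; field.
split.
  apply: (even_posdef_lattice_invmx GK _ GL); try by ldl_entries.
  by even_gram_entries; rewrite PE; rpred_int.
have [Gu _] := mulmx1_unit GK.
apply: (disc_iso_cyclic_rank_one_odd _ _ Gu GE).
- by rewrite /N; lia.
- by rewrite coprimezE abszM coprimeMl coprime2n /N oddD oddM.
- by even_gram_entries; rpred_int.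
Qed.

Lemma lattice_B_8t3 (t : nat) :
  let N := (8 * t + 3)%N in
  let K := invmx (mxl 2 [:: [:: 2%:R / N%:R; 1]; [:: 1; (N%:R + 1) / 2%:R]]) in
  even_posdef_lattice K /\ disc_iso_cyclic K N ((1 : int)%:~R / N%:R).
Proof.
move=> N K; rewrite {}/K; set P : rat := N%:R.
have PE : P = 8 * t%:R + 3 by rewrite /P /N natrD natrM.
have tE : t%:R = (P - 3) / 8 by rewrite PE; field.
have P_gt0 : 0 < P by rewrite ltr0n /N; lia.
have P0 : P != 0 by rewrite gt_eqF.
set G := mxl 2 _.
set G' := mxl 2 [:: [:: 0; 1]; [:: 1; (2 * t%:R + 1) * 2]].
set K := mxl 2 [:: [:: P * (2 * t%:R + 1) * 2; - P]; [:: - P; 2]].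
set L := mxl 2 [:: [:: 1; 0]; [:: P / 2; 1]].
have GE : G = ((2 * 1)%:~R / P) *: delta_mx 0 0 + G'.
  by rewrite /G /G'; mx_entries; rewrite ?tE; field.
have GK : G *m K = 1%:M by rewrite /G /K; mx_entries; rewrite ?tE; field.
have GL : G = L *m diag_mx (\row_i [:: 2 / P; 2^-1]`_i) *m L^T.
  by rewrite /G /L; mx_entries; field.
split.
  apply: (even_posdef_lattice_invmx GK _ GL); try by ldl_entries.
  by even_gram_entries; rewrite PE; rpred_int.
have [Gu _] := mulmx1_unit GK.
apply: (disc_iso_cyclic_rank_one_odd _ _ Gu GE).
- by rewrite /N; lia.
- by rewrite coprimezE abszM coprimeMl coprime2n coprime1n /N oddD oddM.
- by even_gram_entries; rpred_int.
Qed.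

Lemma lattice_D (r : nat) : ~~ odd r -> (2 <= r)%N ->
  let Q : rat := (2 ^ r)%:R in
  let K := invmx (mxl 3 [:: [:: 3%:R / Q; 1; 0];
                            [:: 1; (Q + 2%:R) / 3%:R; 1];
                            [:: 0; 1; 2%:R]]) in
  even_posdef_lattice K /\ disc_is_D K r.
Proof.
move=> r_even r_ge2 Q K; rewrite {}/K.
have [v NE] : exists v, (2 ^ r = 6 * v + 4)%N.
  exists (2 ^ r %/ 6)%N; rewrite {1}(divn_eq (2 ^ r) 6) expn2_even_mod6 //; lia.
have QE : Q = 6 * v%:R + 4 by rewrite /Q NE natrD natrM.
have vE : v%:R = (Q - 4) / 6 by rewrite QE; field.
have Q_gt0 : 0 < Q by rewrite ltr0n expn_gt0.
have Q0 : Q != 0 by rewrite gt_eqF.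
set G := mxl 3 _.
set G' := mxl 3 [:: [:: 0; 1; 0]; [:: 1; (v%:R + 1) * 2; 1]; [:: 0; 1; 2]].
set K := mxl 3 [:: [:: (3 * v%:R + 2) * (4 * v%:R + 3) * 2; - (2 * Q); Q];
                    [:: - (2 * Q); 6; -3];
                    [:: Q; -3; 2]].
set L := mxl 3 [:: [:: 1; 0; 0]; [:: Q / 3; 1; 0]; [:: 0; 3 / 2; 1]].
have GE : G = ((3 : int)%:~R / Q) *: delta_mx 0 0 + G'.
  by rewrite /G /G'; mx_entries; rewrite ?vE; field.
have GK : G *m K = 1%:M by rewrite /G /K; mx_entries; rewrite ?vE; field.
have GL : G = L *m diag_mx (\row_i [:: 3 / Q; 2 / 3; 2^-1]`_i) *m L^T.
  by rewrite /G /L; mx_entries; field.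
split.
  apply: (even_posdef_lattice_invmx GK _ GL); try by ldl_entries.
  by even_gram_entries; rewrite ?QE; rpred_int.
have [Gu _] := mulmx1_unit GK.
have G'gram : even_gram_mx G' by even_gram_entries; rpred_int.
have [G'int _ _] := G'gram.
have [c [cN cq]] := neg5_sqr_equiv3 r_ge2.
have Q2 : (2 ^ r.+1)%:R = 2 * Q :> rat by rewrite expnS natrM.
apply: (disc_iso_cyclic_rank_one (c := c) _ _ G'int GE) => //; rewrite -/Q.
- by rewrite NE; lia.
- by rewrite -natz natrX; apply: coprimezXr.
- exact: even_gram_mx_even.
- by rewrite Q2 (_ : _ *+ 2 = -5) //; field.
- rewrite Q2 (_ : _ * Q ^+ 2 = - 5 * (3 * v%:R + 2)); first by rpred_int.
  by rewrite vE; field.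
Qed.

Lemma is_qr_four p : odd p -> is_qr p (2 * 2).
Proof.
by move=> p_odd; split; [rewrite coprimezE abszM coprimeMl coprime2n p_odd | exists 2].
Qed.

Lemma is_qnr_two p : prime p -> (p %% 8 = 3)%N -> is_qnr p (2 * 1).
Proof.
move=> p_pr p8; split; last exact: two_nonresidue.
have p_odd : odd p by rewrite -(odd_mod p (erefl : odd 8 = false)) p8.
by rewrite coprimezE abszM coprimeMl coprime2n coprime1n p_odd.
Qed.

Theorem mainTheorem6 :
  (forall p r : nat, prime p -> odd p -> odd r ->
    let P : rat := (p ^ r)%:R in
    [/\ (p %% 8 = 7)%N ->
          (let K := invmx (mxl 2 [:: [:: 4%:R / P; 1];
                                     [:: 1; (P + 1) / 4%:R]]) in
           even_posdef_lattice K /\ disc_is_A K p r),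
        (p %% 8 = 5)%N ->
          (let K := invmx (mxl 4 [:: [:: 4%:R / P; 1; 0; 0];
                                     [:: 1; (P + 3%:R) / 4%:R; 1; 0];
                                     [:: 0; 1; 2%:R; 1];
                                     [:: 0; 0; 1; 2%:R]]) in
           even_posdef_lattice K /\ disc_is_A K p r)
      & (p %% 8 = 3)%N ->
          (let K := invmx (mxl 2 [:: [:: 2%:R / P; 1];
                                     [:: 1; (P + 1) / 2%:R]]) in
           even_posdef_lattice K /\ disc_is_B K p r)]) /\
  (forall r : nat, ~~ odd r -> (2 <= r)%N ->
    let Q : rat := (2 ^ r)%:R in
    let K := invmx (mxl 3 [:: [:: 3%:R / Q; 1; 0];
                              [:: 1; (Q + 2%:R) / 3%:R; 1];
                              [:: 0; 1; 2%:R]]) in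
    even_posdef_lattice K /\ disc_is_D K r).
Proof.
split=> [p r p_pr p_odd r_odd P|]; last exact: lattice_D.
have p2 : coprimez 2 p by rewrite coprimezE coprime2n.
have pr8 k : (p %% 8 = k)%N -> exists t, (p ^ r = 8 * t + k)%N.
  move=> pk; exists (p ^ r %/ 8)%N.
  by rewrite {1}(divn_eq (p ^ r) 8) expn_odd_mod8 // pk mulnC.
rewrite {}/P; split=> p8; have [t PE] := pr8 _ p8; rewrite PE.
- have [lat disc] := lattice_A_8t7 t; split=> //; exists 2.
  by split=> //; [exact: is_qr_four | rewrite PE].
- have [lat disc] := lattice_A_8t5 t; split=> //; exists 2.
  by split=> //; [exact: is_qr_four | rewrite PE].
- have [lat disc] := lattice_B_8t3 t; split=> //; exists 1.
  by split=> //; [rewrite coprimezE coprime1n | exact: is_qnr_two | rewrite PE].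
Qed.
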